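(* Let $E$ be a locally bounded or locally convex separable F-space with F-norm $\|\cdot\|$, and let $T:E\to E$ be an operator satisfying the Frequent Hypercyclicity Criterion with dense set $E_0$ and map $S:E_0\to E_0$. Let $(a_k)_{k\ge1}$ be a sequence of nonzero scalars and $(x_k)_{k\ge1}$ a dense sequence in $E_0$. Then there exists an increasing sequence $(n_k)_{k\ge1}$ of positive integers such that the series $x=\sum_{k\ge1}a_kS^{n_k}(x_k)$ converges in $E$ and $x$ is a supercyclic vector for $T$.
   Context: An F-space is a complete metrizable topological vector space; operator means continuous linear map. $T$ satisfies the Frequent Hypercyclicity Criterion if there exist a dense subset $E_0\subseteq E$ and a map $S:E_0\to E_0$ such that for every $x\in E_0$: (i) $\sum_{n\ge0}T^n(x)$ is unconditionally convergent, (ii) $\sum_{n\ge0}S^n(x)$ is unconditionally convergent, (iii) $TS(x)=x$. A vector $x$ is supercyclic for $T$ if $\{\lambda T^n(x): n\ge0,\lambda\in\mathbb{K}\}$ is dense in $E$. *)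

From mathcomp Require Import all_boot all_order all_algebra.
From mathcomp Require Import all_classical all_reals all_analysis.
From mathcomp Require Import complex.
Import numFieldNormedType.Exports.
Import Order.TTheory GRing.Theory Num.Theory.

Set Implicit Arguments.
Unset Strict Implicit.
Unset Printing Implicit Defensive.

Local Open Scope classical_set_scope.
Local Open Scope ring_scope.

Section Defs.
Variables (R : realType) (K : numFieldType) (E : topologicalLmodType K).

Definition is_Fnorm (N : E -> R) : Prop :=
  [/\ (forall x, 0 <= N x),
      (forall x, N x = 0 <-> x = 0),
      (forall (l : K) x, `|l| <= 1 -> N (l *: x) <= N x),
      (forall x y, N (x + y) <= N x + N y) &
      (forall x (e : R), 0 < e ->
         exists2 d : K, 0 < d & forall l : K, `|l| < d -> N (l *: x) < e)].

Definition Fspace_with_Fnorm (N : E -> R) : Prop :=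
  [/\ is_Fnorm N,
      (forall x : E, nbhs x =
         filter_from [set e : R | 0 < e] (fun e => [set y : E | N (y - x) < e])) &
      (forall u : nat -> E,
         (forall e : R, 0 < e -> exists M, forall m n, (M <= m)%N -> (M <= n)%N ->
              N (u m - u n) < e) ->
         exists l : E, u @ \oo --> l)].

Definition separable_space : Prop :=
  exists D : set E, countable D /\ dense D.

Definition tvs_bounded (A : set E) : Prop :=
  forall V : set E, nbhs (0 : E) V ->
    exists2 s : K, 0 < s & forall t : K, s < `|t| -> A `<=` [set t *: v | v in V].

Definition locally_bounded : Prop :=
  exists U : set E, nbhs (0 : E) U /\ tvs_bounded U.

Definition convex_set (U : set E) : Prop :=
  forall x y, U x -> U y -> forall t : K, 0 <= t <= 1 -> U (t *: x + (1 - t) *: y).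

Definition locally_convex : Prop :=
  forall V : set E, nbhs (0 : E) V ->
    exists U : set E, [/\ nbhs (0 : E) U, convex_set U & U `<=` V].

Definition operator (T : E -> E) : Prop :=
  linear T /\ continuous T.

Definition unconditionally_convergent (u : nat -> E) : Prop :=
  forall sigma : nat -> nat, bijective sigma ->
    exists l : E, series (u \o sigma) @ \oo --> l.

(* Frequent Hypercyclicity Criterion with dense set E0 and map S : E0 -> E0
   (S is represented by a function on E mapping E0 into E0; only its values on
   E0 matter). *)
Definition FHC_with (T : E -> E) (E0 : set E) (S : E -> E) : Prop :=
  [/\ dense E0,
      (forall x, E0 x -> E0 (S x)) &
      (forall x, E0 x ->
        [/\ unconditionally_convergent (fun n => iter n T x),
            unconditionally_convergent (fun n => iter n S x) &
            T (S x) = x])].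

Definition supercyclic (T : E -> E) (x : E) : Prop :=
  dense [set y : E | exists (n : nat) (l : K), y = l *: iter n T x].

End Defs.

Definition Theorem4 (R : realType) (K : numFieldType) : Prop :=
  forall (E : topologicalLmodType K) (N : E -> R),
    Fspace_with_Fnorm N ->
    separable_space E ->
    (locally_bounded E \/ locally_convex E) ->
  forall (T : E -> E) (E0 : set E) (S : E -> E),
    operator T ->
    FHC_with T E0 S ->
  forall (a : nat -> K) (xs : nat -> E),
    (forall k, a k != 0) ->
    (forall k, E0 (xs k)) ->
    dense (range xs) ->
  exists n : nat -> nat,
    [/\ (forall k, (0 < n k)%N),
        (forall k, (n k < n k.+1)%N) &
        exists x : E,
          series (fun k => a k *: iter (n k) S (xs k)) @ \oo --> x
          /\ supercyclic T x].

From mathcomp Require Import all_boot all_order all_algebra.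
From mathcomp Require Import all_classical all_reals all_analysis.
From mathcomp Require Import complex.
From mathcomp Require Import lra.
Import numFieldNormedType.Exports.
Import Order.TTheory GRing.Theory Num.Theory.

Set Implicit Arguments.
Unset Strict Implicit.
Unset Printing Implicit Defensive.

Local Open Scope classical_set_scope.
Local Open Scope ring_scope.

(* Choose n_0 < n_1 < ... inductively, with eps_j = 2^-j: the term a_j S^(n_j) x_j is
   eps_j-small, and for i < j so are (a_j/a_i) S^(n_j - n_i) x_j and, with an extra
   factor 1/(j+1), (a_i/a_j) T^(n_j - n_i) x_i.  This is possible since T^n x -> 0 and
   S^n x -> 0 on E0 (terms of unconditionally convergent series).  The series
   x = sum_j a_j S^(n_j) x_j then converges by completeness, and as T S = id on E0,
   a_k^-1 T^(n_k) x = x_k + (i < k terms) + (i > k terms) lies within 3 eps_k of x_k.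
   Since a dense sequence visits every ball infinitely often, these multiples of the
   orbit of x are dense. *)

Lemma near_forall_ltn {T : Type} (F : set_system T) {FF : Filter F} (j : nat)
    (Q : nat -> T -> Prop) :
  (forall i, (i < j)%N -> \forall x \near F, Q i x) ->
  \forall x \near F, forall i, (i < j)%N -> Q i x.
Proof.
move=> hQ.
apply: filterS (@filter_forall _ _ (fun i : 'I_j => Q i) F _ (fun i => hQ i (ltn_ord i))).
by move=> x hx i ij; exact: (hx (Ordinal ij)).
Qed.

Lemma strong_rec_choice (T : pointedType) (P : nat -> (nat -> T) -> T -> Prop) :
  (forall j p p' t, (forall i, (i < j)%N -> p i = p' i) -> P j p t -> P j p' t) ->
  (forall j p, exists t, P j p t) ->
  exists f : nat -> T, forall j, P j f (f j).
Proof.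
move=> P_ext P_ex.
have [g gP] := choice (fun jp : nat * (nat -> T) => P_ex jp.1 jp.2).
(* [prefix j i] is the [i]-th value of [f] for [i < j], and junk otherwise. *)
pose fix prefix j : nat -> T :=
  if j is j'.+1 then fun i => if (i < j')%N then prefix j' i else g (j', prefix j')
  else fun=> point.
exists (fun j => g (j, prefix j)) => j.
have prefixE i : (i < j)%N -> prefix j i = g (i, prefix i).
  elim: j i => // j IH i; rewrite ltnS leq_eqVlt => /orP[/eqP -> | ij] /=.
    by rewrite ltnn.
  by rewrite ij; exact: IH.
exact: P_ext prefixE (gP (j, prefix j)).
Qed.

Lemma cvg_series_term0 (V : topologicalZmodType) (u : nat -> V) (l : V) :
  series u @ \oo --> l -> u @ \oo --> 0.
Proof.
move=> hl; rewrite -(seriesK u) -(subrr l).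
have hlS : series u n.+1 @[n --> \oo] --> l := cvg_comp _ _ (cvg_addnl 1) hl.
exact: (cvg_comp2 (h := fun a b : V => a - b) hlS hl (@sub_continuous V (l, l))).
Qed.

Lemma unconditionally_convergent_cvg0 (K : numFieldType) (E : topologicalLmodType K)
    (u : nat -> E) :
  unconditionally_convergent u -> u @ \oo --> 0.
Proof.
move=> hu; have [l] := hu id (Bijective (frefl id) (frefl id)).
exact: cvg_series_term0.
Qed.

Lemma scaler_continuous_lmod (K : numFieldType) (E : topologicalLmodType K) (c : K) :
  continuous (fun x : E => c *: x).
Proof.
by move=> x; exact: (cvg_comp2 (cvg_cst _) cvg_id (@scale_continuous K E (_, _))).
Qed.

Lemma iter_continuous (X : topologicalType) (f : X -> X) n :
  continuous f -> continuous (iter n f).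
Proof.
by move=> fcont; elim: n => [|n IH] x; [exact: cvg_id | exact: cvg_comp (IH x) (fcont _)].
Qed.

Section Dyadic.
Variable R : realType.

Definition eps (j : nat) : R := 1 / 2 ^+ j.

Lemma eps_gt0 j : 0 < eps j.
Proof. by rewrite divr_gt0 // exprn_gt0. Qed.

Lemma mul2_epsS j : 2 * eps j.+1 = eps j.
Proof. by rewrite /eps exprS !mul1r invfM mulrA divff ?mul1r. Qed.

Lemma sum_eps_le m n : (m <= n)%N -> \sum_(m <= j < n) eps j <= 2 * eps m.
Proof.
move=> mn; rewrite (eq_big_nat _ _ (F2 := fun j => - (2 * eps j.+1) - - (2 * eps j))).
  by rewrite telescope_sumr // opprK; have := eps_gt0 n; lra.
by move=> j _; rewrite opprK mul2_epsS; lra.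
Qed.

Lemma near_eps_lt (e : R) : 0 < e -> \forall j \near \oo, eps j < e.
Proof. by move=> e0; exact: (near_infty_natSinv_expn_lt (PosNum e0)). Qed.

End Dyadic.

Section Fnorm.
Variables (R : realType) (K : numFieldType) (E : topologicalLmodType K) (N : E -> R).
Hypothesis hN : Fspace_with_Fnorm N.

Let hF : is_Fnorm N. Proof. by case: hN. Qed.

Lemma Fnorm_ge0 x : 0 <= N x. Proof. by case: hF. Qed.

Lemma Fnorm_eq0 x : N x = 0 <-> x = 0. Proof. by case: hF. Qed.

Lemma Fnorm0 : N 0 = 0. Proof. exact/Fnorm_eq0. Qed.

Lemma Fnorm_gt0 x : x != 0 -> 0 < N x.
Proof.
by move=> x0; rewrite lt_neqAle Fnorm_ge0 andbT eq_sym; apply: contra_neq x0 => /Fnorm_eq0.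
Qed.

Lemma FnormD x y : N (x + y) <= N x + N y. Proof. by case: hF. Qed.

Lemma FnormN x : N (- x) = N x.
Proof.
case: hF => _ _ hZ _ _.
have le_opp y : N (- y) <= N y by rewrite -scaleN1r hZ // normrN normr1.
by apply/eqP; rewrite eq_le le_opp /= -{1}(opprK x) le_opp.
Qed.

Lemma Fnorm_distC x y : N (x - y) = N (y - x). Proof. by rewrite -opprB FnormN. Qed.

Lemma Fnorm_dist_triangle x y z : N (x - z) <= N (x - y) + N (y - z).
Proof. by have := FnormD (x - y) (y - z); rewrite addrA subrK. Qed.

Lemma Fnorm_sum (I : Type) (r : seq I) (P : pred I) (F : I -> E) :
  N (\sum_(i <- r | P i) F i) <= \sum_(i <- r | P i) N (F i).
Proof.
elim/big_ind2: _ => [|x1 x2 y1 y2 h1 h2|//]; first by rewrite Fnorm0.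
exact: le_trans (FnormD _ _) (lerD h1 h2).
Qed.

Lemma cvg_Fnorm {I : Type} (F : set_system I) {FF : Filter F} (u : I -> E) (l : E) :
  u @ F --> l <-> forall e, 0 < e -> \forall i \near F, N (u i - l) < e.
Proof.
case: hN => _ nbhsE _; split => [ul e e0 | small A].
  by apply: (ul [set y | N (y - l) < e]); rewrite nbhsE; exists e.
by rewrite nbhsE => -[e e0 eA]; apply: filterS eA (small e e0).
Qed.

Lemma near_Fnorm_scale_lt (u : nat -> E) (c : K) (e : R) : u @ \oo --> 0 -> 0 < e ->
  \forall n \near \oo, N (c *: u n) < e.
Proof.
move=> u0 e0; have := cvg_comp _ _ u0 (@scaler_continuous_lmod _ _ c 0).
rewrite scaler0 => cu0.
by apply: filterS ((cvg_Fnorm _ _).1 cu0 e e0) => n; rewrite subr0.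
Qed.

Lemma Fnorm_series_cvg (u : nat -> E) :
  (forall j, N (u j) <= eps R j) -> exists l : E, series u @ \oo --> l.
Proof.
move=> u_le; case: hN => _ _ complete; apply: complete => e e0.
have [M _ HM] := near_eps_lt (divr_gt0 e0 (ltr0Sn R 1)).
have tail_small m n : (M <= n <= m)%N -> N (series u m - series u n) < e.
  case/andP=> Mn nm; rewrite /series /= (big_cat_nat (leq0n n) nm) /= addrAC subrr add0r.
  apply: le_lt_trans (Fnorm_sum _ _ _) _.
  apply: le_lt_trans (ler_sum _ (fun j _ => u_le j)) _.
  by apply: le_lt_trans (sum_eps_le _ nm) _; have := HM n Mn; lra.
exists M => m n Mm Mn; case: (leqP n m) => nm; first by apply: tail_small; rewrite Mn.
by rewrite Fnorm_distC; apply: tail_small; rewrite Mm ltnW.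
Qed.

Lemma Fnorm_not_isolated (w z : E) (r : R) : w != 0 -> 0 < r ->
  exists2 y, y != z & N (y - z) < r.
Proof.
move=> w0 r0; case: hF => _ _ _ _ /(_ w r r0) [d d0 hd].
have d20 : 0 < d / 2 by rewrite divr_gt0.
have tw0 : (d / 2) *: w != 0 by rewrite scaler_eq0 negb_or gt_eqF.
exists (z + (d / 2) *: w); first by rewrite -subr_eq0 addrAC subrr add0r.
rewrite addrAC subrr add0r; apply: hd.
by rewrite gtr0_norm // ltr_pdivrMr // ltr_pMr // ltr1n.
Qed.

Lemma dense_Fnorm (D : set E) (z : E) (r : R) : dense D -> 0 < r ->
  exists2 y, D y & N (y - z) < r.
Proof.
case: hN => _ nbhsE _ Ddense r0.
have ball_nbhs : nbhs z [set y | N (y - z) < r] by rewrite nbhsE; exists r.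
have [y [/interior_subset zy Dy]] := Ddense _ (ex_intro _ z ball_nbhs) (open_interior _).
by exists y.
Qed.

Lemma dense_seq_Fnorm_often (xs : nat -> E) : dense (range xs) ->
  forall k0 z (r : R), 0 < r -> exists2 k, (k0 <= k)%N & N (xs k - z) < r.
Proof.
move=> xs_dense; case: (pselect (exists w : E, w != 0)) => [[w w0] | trivialE]; last first.
  have all0 (x : E) : x = 0 by apply: contrapT => x0; apply: trivialE; exists x; exact/eqP.
  by move=> k0 z r r0; exists k0; rewrite // (all0 (_ - _)) Fnorm0.
elim=> [z r r0 | k0 IH z r r0].
  by have [_ [k _ <-]] := dense_Fnorm z xs_dense r0; exists k.
have r20 : 0 < r / 2 by rewrite divr_gt0.
have [y yk0 yz] : exists2 y, y != xs k0 & N (y - z) < r / 2.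
  have [<- | k0z] := eqVneq (xs k0) z; first exact: Fnorm_not_isolated w0 r20.
  by exists z; rewrite 1?eq_sym // subrr Fnorm0.
have r'0 : 0 < Num.min (r / 2) (N (xs k0 - y)).
  by rewrite lt_min r20 Fnorm_gt0 // subr_eq0 eq_sym.
have [k k0k] := IH y _ r'0; rewrite lt_min => /andP[ky kr].
exists k.
  by rewrite ltn_neqAle k0k andbT; apply: contraTneq kr => <-; rewrite ltxx.
by apply: le_lt_trans (Fnorm_dist_triangle _ y _) _; lra.
Qed.

End Fnorm.

Section LinearIterates.
Variables (K : numFieldType) (E : topologicalLmodType K) (T : E -> E).
Hypothesis Tlin : linear T.

Lemma linear_iterD n x y : iter n T (x + y) = iter n T x + iter n T y.
Proof. by elim: n => //= n ->; have := Tlin 1 (iter n T x) (iter n T y); rewrite !scale1r. Qed.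

Lemma linear_iter0 n : iter n T 0 = 0.
Proof. by apply: (addrI (iter n T 0)); rewrite -linear_iterD !addr0. Qed.

Lemma linear_iterZ n (c : K) x : iter n T (c *: x) = c *: iter n T x.
Proof.
have T0 : T 0 = 0 := linear_iter0 1.
by elim: n => //= n ->; have := Tlin c (iter n T x) 0; rewrite !addr0 T0 addr0.
Qed.

Lemma linear_iter_sum n (I : Type) (r : seq I) (P : pred I) (F : I -> E) :
  iter n T (\sum_(i <- r | P i) F i) = \sum_(i <- r | P i) iter n T (F i).
Proof. by apply: big_morph; [exact: linear_iterD | exact: linear_iter0]. Qed.

End LinearIterates.

Section RightInverseIterates.
Variables (E : Type) (T : E -> E) (E0 : set E) (S : E -> E).
Hypothesis SE0 : forall x, E0 x -> E0 (S x).
Hypothesis TS : forall x, E0 x -> T (S x) = x.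

Lemma iterS_E0 n z : E0 z -> E0 (iter n S z).
Proof. by move=> z0; elim: n => //= n; apply: SE0. Qed.

Lemma iterT_iterS_le z m n : E0 z -> (m <= n)%N -> iter m T (iter n S z) = iter (n - m) S z.
Proof.
move=> z0; elim: m => [|m IH] mn; first by rewrite subn0.
by rewrite iterS IH ?(ltnW mn) // -(subnSK mn) iterS TS //; exact: iterS_E0.
Qed.

Lemma iterT_iterS_ge z m n : E0 z -> (n <= m)%N -> iter m T (iter n S z) = iter (m - n) T z.
Proof. by move=> z0 nm; rewrite -{1}(subnK nm) iterD iterT_iterS_le // subnn. Qed.

End RightInverseIterates.

Section Construction.
Variables (R : realType) (K : numFieldType) (E : topologicalLmodType K) (N : E -> R).
Hypothesis hN : Fspace_with_Fnorm N.
Variables (T : E -> E) (E0 : set E) (S : E -> E).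
Hypothesis Tlin : linear T.
Hypothesis Tcont : continuous T.
Hypothesis SE0 : forall x, E0 x -> E0 (S x).
Hypothesis TS : forall x, E0 x -> T (S x) = x.
Hypothesis iterT_cvg0 : forall x, E0 x -> iter n T x @[n --> \oo] --> 0.
Hypothesis iterS_cvg0 : forall x, E0 x -> iter n S x @[n --> \oo] --> 0.
Variables (a : nat -> K) (xs : nat -> E).
Hypothesis a_neq0 : forall k, a k != 0.
Hypothesis xsE0 : forall k, E0 (xs k).

(* [admissible j p n]: [n] is a valid choice of n_j given n_i = [p i] for i < j. *)
Definition admissible j (p : nat -> nat) (n : nat) : Prop :=
  [/\ forall i, (i < j)%N -> (p i < n)%N, (0 < n)%N,
      N (a j *: iter n S (xs j)) < eps R j,
      forall i, (i < j)%N -> N ((a j / a i) *: iter (n - p i) S (xs j)) < eps R j &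
      forall i, (i < j)%N -> N ((a i / a j) *: iter (n - p i) T (xs i)) < eps R j / j.+1%:R].

Lemma admissible_ext j p p' n :
  (forall i, (i < j)%N -> p i = p' i) -> admissible j p n -> admissible j p' n.
Proof. by move=> pp' [h1 h2 h3 h4 h5]; split=> // i ij; rewrite -pp' //; auto. Qed.

Let near_iter_lt (f : E -> E) x (c : K) (e : R) :
  iter n f x @[n --> \oo] --> 0 -> 0 < e -> \forall n \near \oo, N (c *: iter n f x) < e.
Proof. exact: (@near_Fnorm_scale_lt _ _ _ _ hN (fun n => iter n f x)). Qed.

Let near_iter_subn_lt (f : E -> E) x (c : K) (e : R) p :
  iter n f x @[n --> \oo] --> 0 -> 0 < e ->
  \forall n \near \oo, N (c *: iter (n - p) f x) < e.
Proof. by move=> fx0 e0; exact: (cvg_subnr p _ (near_iter_lt c fx0 e0)). Qed.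

Lemma exists_admissible j p : exists n, admissible j p n.
Proof.
have ej := eps_gt0 R j.
have ej' : 0 < eps R j / j.+1%:R by rewrite divr_gt0.
suff: \forall n \near \oo, admissible j p n by move/filter_ex.
near=> n; split.
- by near: n; apply: near_forall_ltn => i _; exact: nbhs_infty_gt.
- by near: n; exact: nbhs_infty_gt.
- by near: n; exact: near_iter_lt (iterS_cvg0 (xsE0 j)) ej.
- near: n; apply: near_forall_ltn => i _.
  exact: near_iter_subn_lt (iterS_cvg0 (xsE0 j)) ej.
- near: n; apply: near_forall_ltn => i _.
  exact: near_iter_subn_lt (iterT_cvg0 (xsE0 i)) ej'.
Unshelve. all: by end_near.
Qed.

Variable n : nat -> nat.
Hypothesis n_admissible : forall j, admissible j n (n j).

Lemma admissible_gt0 j : (0 < n j)%N.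
Proof. by case: (n_admissible j). Qed.

Lemma admissible_increasing i j : (i < j)%N -> (n i < n j)%N.
Proof. by case: (n_admissible j) => lt_n _ _ _ _; apply: lt_n. Qed.

Let u j := a j *: iter (n j) S (xs j).

Lemma admissible_series_cvg : exists x : E, series u @ \oo --> x.
Proof. by apply: (Fnorm_series_cvg hN) => j; apply: ltW; case: (n_admissible j). Qed.

Lemma iterT_series_split k m : (k < m)%N ->
  (a k)^-1 *: iter (n k) T (series u m) =
  \sum_(0 <= j < k) (a j / a k) *: iter (n k - n j) T (xs j) + xs k
  + \sum_(k.+1 <= j < m) (a j / a k) *: iter (n j - n k) S (xs j).
Proof.
move=> km; rewrite /series /= linear_iter_sum // scaler_sumr.
rewrite (big_cat_nat (leq0n k) (ltnW km)) /= (big_ltn km) addrA.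
have nu j : (a k)^-1 *: iter (n k) T (u j) = (a j / a k) *: iter (n k) T (iter (n j) S (xs j)).
  by rewrite /u linear_iterZ // scalerA mulrC.
congr (_ + _ + _).
- apply: eq_big_nat => j /andP[_ jk]; rewrite nu (iterT_iterS_ge SE0 TS) //.
  exact: ltnW (admissible_increasing jk).
- by rewrite nu divff // scale1r (iterT_iterS_le SE0 TS) // subnn.
- apply: eq_big_nat => j /andP[kj _]; rewrite nu (iterT_iterS_le SE0 TS) //.
  exact: ltnW (admissible_increasing kj).
Qed.

Lemma iterT_series_approx k m : (k < m)%N ->
  N ((a k)^-1 *: iter (n k) T (series u m) - xs k) <= 2 * eps R k.
Proof.
move=> km; rewrite iterT_series_split // addrAC addrK.
set head := \sum_(0 <= j < k) _; set tail := \sum_(k.+1 <= j < m) _.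
have head_le : N head <= eps R k.
  apply: le_trans (Fnorm_sum hN _ _ _) _.
  apply: (@le_trans _ _ (\sum_(0 <= j < k) (eps R k / k.+1%:R))).
    apply: ler_sum_nat => j /andP[_ jk]; apply: ltW.
    by case: (n_admissible k) => _ _ _ _; apply.
  rewrite sumr_const_nat subn0 -[_ *+ k]mulr_natr mulrAC ler_pdivrMr ?ltr0Sn //.
  by apply: ler_wpM2l; [exact/ltW/eps_gt0 | rewrite ler_nat].
have tail_le : N tail <= eps R k.
  apply: le_trans (Fnorm_sum hN _ _ _) _.
  apply: (@le_trans _ _ (\sum_(k.+1 <= j < m) eps R j)).
    apply: ler_sum_nat => j /andP[kj _]; apply: ltW.
    by case: (n_admissible j) => _ _ _ + _; apply.
  by rewrite -mul2_epsS; exact: sum_eps_le.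
by apply: le_trans (FnormD hN _ _) _; lra.
Qed.

Lemma iterT_limit_approx x k : series u @ \oo --> x ->
  N ((a k)^-1 *: iter (n k) T x - xs k) < 3 * eps R k.
Proof.
move=> ux; pose f v := (a k)^-1 *: iter (n k) T v.
have fcont : continuous f.
  move=> v; exact: (cvg_comp _ _ (@iter_continuous _ T (n k) Tcont v)
                                  (@scaler_continuous_lmod _ _ (a k)^-1 _)).
have fux : (f \o series u) @ \oo --> f x := cvg_comp _ _ ux (fcont x).
have [M _ HM] := (cvg_Fnorm hN _ _).1 fux _ (eps_gt0 R k).
have m_big := HM _ (leq_maxl M k.+1); have := iterT_series_approx (leq_maxr M k.+1).
rewrite /f /= in m_big *; move: m_big; rewrite Fnorm_distC // => m_big m_approx.
by apply: le_lt_trans (Fnorm_dist_triangle hN _ (f (series u (maxn M k.+1))) _) _; lra.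
Qed.

Lemma admissible_supercyclic x : dense (range xs) -> series u @ \oo --> x ->
  supercyclic T x.
Proof.
move=> xs_dense ux O [z Oz] Oopen.
have := open_nbhs_nbhs (conj Oopen Oz); case: (hN) => _ -> _ [r r0 ballO].
have [k0 _ eps_small] := near_eps_lt (divr_gt0 r0 (ltr0Sn R 5)).
have [k k0k xsk] := dense_seq_Fnorm_often hN xs_dense k0 z (divr_gt0 r0 (ltr0Sn R 1)).
exists ((a k)^-1 *: iter (n k) T x); split; last by exists (n k), (a k)^-1.
apply: ballO; apply: le_lt_trans (Fnorm_dist_triangle hN _ (xs k) _) _.
have := iterT_limit_approx k ux; have := eps_small _ k0k; rewrite /=; lra.
Qed.

End Construction.

Lemma Theorem4_numField (R : realType) (K : numFieldType) : Theorem4 R K.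
Proof.
move=> E N hN _ _ T E0 S [Tlin Tcont] [_ SE0 FHC] a xs a_neq0 xsE0 xs_dense.
have TS x : E0 x -> T (S x) = x by case/FHC.
have iterT_cvg0 x : E0 x -> iter n T x @[n --> \oo] --> 0.
  by case/FHC => /unconditionally_convergent_cvg0.
have iterS_cvg0 x : E0 x -> iter n S x @[n --> \oo] --> 0.
  by case/FHC => _ /unconditionally_convergent_cvg0.
have [n n_adm] := strong_rec_choice (@admissible_ext _ _ _ N T S a xs)
  (exists_admissible hN iterT_cvg0 iterS_cvg0 a xsE0).
exists n; split; [exact: admissible_gt0 | by move=> k; exact: admissible_increasing |].
have [x ux] := admissible_series_cvg hN n_adm.
exists x; split; first exact: ux.
exact: (admissible_supercyclic hN Tlin Tcont SE0 TS a_neq0 xsE0 n_adm xs_dense ux).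
Qed.

Theorem mainTheorem4 (R : realType) : Theorem4 R R /\ Theorem4 R R[i].
Proof. by split; exact: Theorem4_numField. Qed.
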